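(* Let $H$ be a Hilbert space and $U_{ik}\in B(H)$, $i,k=1,\dots,n$, operators satisfying relations (R1)–(R5). Then each $U_{ik}$ and each $U_{ik}^*$ is a partial isometry.
   Context: $n\ge2$, $\theta\in M_n(\mathbb R)$ skew-symmetric, $\omega_{ij}=e^{2\pi i\theta_{ij}}$. Relations, for all $i,j,k,l\in\{1,\dots,n\}$: (R1) $U_{ik}U_{jl}+\omega_{ji}U_{jk}U_{il}=\omega_{kl}U_{il}U_{jk}+\omega_{ji}\omega_{kl}U_{jl}U_{ik}$; (R2) $\sum_iU_{ik}U_{il}^*=\delta_{kl}1$; (R3) $\sum_iU_{il}^*U_{ik}=\delta_{kl}1$; (R4) $U_{jk}U_{ik}^*=0$ for $i\neq j$; (R5) $U_{ik}^*U_{jk}=0$ for $i\neq j$. *)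

From HB Require Import structures.
From mathcomp Require Import all_boot all_order all_algebra.
From mathcomp Require Import complex.
From mathcomp Require Import all_classical all_reals all_analysis.
Set Implicit Arguments. Unset Strict Implicit. Unset Printing Implicit Defensive.
Import Order.TTheory GRing.Theory Num.Theory.
Local Open Scope ring_scope.

Definition inner_product (R : realType) (H : lmodType R[i]) (ip : H -> H -> R[i]) :=
  [/\ forall (a : R[i]) (x y z : H), ip (a *: x + y) z = a * ip x z + ip y z,
      forall x y : H, ip y x = (ip x y)^*,
      forall x : H, 0 <= ip x x
    & forall x : H, ip x x = 0 -> x = 0].

(* ||d||^2 = ip d d; "||d|| < e" is expressed as ip d d < e^2. *)
Definition hilbert_space (R : realType) (H : lmodType R[i]) (ip : H -> H -> R[i]) :=
  inner_product ip /\
  forall u : nat -> H,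
    (forall e : R[i], 0 < e -> exists N : nat, forall m k : nat, (N <= m)%N -> (N <= k)%N ->
        ip (u m - u k) (u m - u k) < e) ->
    exists x : H, forall e : R[i], 0 < e -> exists N : nat, forall m : nat, (N <= m)%N ->
        ip (u m - x) (u m - x) < e.

Definition bounded_op (R : realType) (H : lmodType R[i]) (ip : H -> H -> R[i]) (T : H -> H) :=
  (forall (a : R[i]) (x y : H), T (a *: x + y) = a *: T x + T y) /\
  exists M : R[i], 0 <= M /\ forall x : H, ip (T x) (T x) <= M * ip x x.

Definition is_adjoint (R : realType) (H : lmodType R[i]) (ip : H -> H -> R[i]) (T S : H -> H) :=
  forall x y : H, ip (T x) y = ip x (S y).

(* T is a partial isometry: T^* T is a projection (idempotent; it is automatically self-adjoint). *)
Definition partial_isometry (R : realType) (H : lmodType R[i]) (ip : H -> H -> R[i]) (T : H -> H) :=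
  exists S : H -> H, is_adjoint ip T S /\
    forall x : H, S (T (S (T x))) = S (T x).

(* omega_ij = exp(2 pi i theta_ij) *)
Definition omega (R : realType) (n : nat) (theta : 'M[R]_n) (i j : 'I_n) : R[i] :=
  Complex (cos (2 * pi * theta i j)) (sin (2 * pi * theta i j)).

From HB Require Import structures.
From mathcomp Require Import all_boot all_order all_algebra.
From mathcomp Require Import complex.
From mathcomp Require Import all_classical all_reals all_analysis.
Import Order.TTheory GRing.Theory Num.Theory.
Local Open Scope ring_scope.

(* Only (R3) on the diagonal and (R4) are needed: applying U_ik to
   x = sum_j U*_jk U_jk x kills every term j <> i by (R4), so
   U_ik U*_ik U_ik = U_ik.  Multiplying on the left or on the right by U*_ik
   shows that U*_ik U_ik and U_ik U*_ik are idempotent, i.e. U_ik and U*_ik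
   are partial isometries. *)

Section PartialIsometries.

Context {R : realType} {H : lmodType R[i]} (ip : H -> H -> R[i]).

Lemma additive_of_linear {T : H -> H} :
  (forall (a : R[i]) (x y : H), T (a *: x + y) = a *: T x + T y) ->
  T 0 = 0 /\ {morph T : x y / x + y}.
Proof.
move=> linT; have TD : {morph T : x y / x + y}.
  by move=> x y; have := linT 1 x y; rewrite !scale1r.
split=> //; apply: (addrI (T 0)).
by rewrite -TD !addr0.
Qed.

Lemma is_adjoint_sym (T S : H -> H) :
  inner_product ip -> is_adjoint ip T S -> is_adjoint ip S T.
Proof.
by move=> [_ ip_conj _ _] adjTS x y; rewrite ip_conj -adjTS -ip_conj.
Qed.

Lemma partial_isometry_adjoint_pair (T S : H -> H) :
  inner_product ip -> is_adjoint ip T S ->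
  (forall x, T (S (T x)) = T x) ->
  partial_isometry ip T /\ partial_isometry ip S.
Proof.
move=> ipH adjTS TST; split.
  by exists S; split=> // x; rewrite TST.
exists T; split; first exact: is_adjoint_sym.
by move=> x; rewrite TST.
Qed.

End PartialIsometries.

Theorem proposition3p8 (R : realType) (n : nat) (hn : (2 <= n)%N)
  (theta : 'M[R]_n) (htheta : theta^T = - theta)
  (H : lmodType R[i]) (ip : H -> H -> R[i]) (hH : hilbert_space ip)
  (U Ustar : 'I_n -> 'I_n -> H -> H)
  (hU : forall i k, bounded_op ip (U i k))
  (hUstar : forall i k, is_adjoint ip (U i k) (Ustar i k))
  (R1 : forall (i j k l : 'I_n) (x : H),
      U i k (U j l x) + omega theta j i *: U j k (U i l x)
      = omega theta k l *: U i l (U j k x)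
        + (omega theta j i * omega theta k l) *: U j l (U i k x))
  (R2 : forall (k l : 'I_n) (x : H),
      \sum_(i < n) U i k (Ustar i l x) = (if k == l then x else 0))
  (R3 : forall (k l : 'I_n) (x : H),
      \sum_(i < n) Ustar i l (U i k x) = (if k == l then x else 0))
  (R4 : forall (i j k : 'I_n) (x : H), i != j -> U j k (Ustar i k x) = 0)
  (R5 : forall (i j k : 'I_n) (x : H), i != j -> Ustar i k (U j k x) = 0) :
  forall i k : 'I_n, partial_isometry ip (U i k) /\ partial_isometry ip (Ustar i k).
Proof.
move=> i k; apply: partial_isometry_adjoint_pair; [exact: hH.1 | exact: hUstar |].
move=> x; have [U0 UD] := additive_of_linear (hU i k).1.
have := R3 k k x; rewrite eqxx => sum_UstarU.
rewrite -{2}sum_UstarU (big_morph _ UD U0) (bigD1 i) //= big1 ?addr0 //.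
by move=> j ji; apply: R4.
Qed.
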